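(* Let $n\ge2$, $1\le k\le n-1$ and $n-1\ge m_1>\dots>m_k\ge1$. Let the complement of $\{n-m_1,\dots,n-m_k\}$ in $\{1,\dots,n\}$ be $\{j_1<j_2<\dots<j_{n-k}\}$ (so $j_{n-k}=n$) and set $C(m_1,\dots,m_k)=(n-j_1,\dots,n-j_{n-k-1})$. Then $C(C(m_1,\dots,m_k))=(m_1,\dots,m_k)$. Write \[ \omega_{m_1,\dots,m_k}:=d_{m_1}\cdots d_{m_k}\Delta=\sum_{1\le i_1<\dots<i_k\le n}h^{m_1\dots m_k}_{i_1\dots i_k}\,dx_{i_1}\wedge\cdots\wedge dx_{i_k}, \] where $\Delta=\prod_{1\le i<j\le n}(x_i-x_j)$. Then the coefficient of the monomial $x_1^{n-j_1}x_2^{n-j_2}\cdots x_{n-k-1}^{n-j_{n-k-1}}$ in $h^{m_1\dots m_k}_{n-k+1,n-k+2,\dots,n}$ is $\pm k!\,m_1!\cdots m_k!$. Finally, if $n-1\ge r_1>\dots>r_k\ge1$ and this monomial occurs with non-zero coefficient in $h^{r_1\dots r_k}_{n-k+1,n-k+2,\dots,n}$, then $r_i=m_i$ for all $i=1,\dots,k$.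
   Context: Forms live in $\mathbb{R}[x_1,\dots,x_n]\otimes\wedge\mathbb{R}^n$. With $\partial_i=\partial/\partial x_i$, $d_j(h\,dx_{i_1}\wedge\cdots\wedge dx_{i_k})=\sum_{l=1}^n(\partial_l^jh)\,dx_l\wedge dx_{i_1}\wedge\cdots\wedge dx_{i_k}$, extended linearly. *)

From HB Require Import structures.
From mathcomp Require Import all_boot all_order all_algebra.
From mathcomp Require Import mpoly.
Set Implicit Arguments. Unset Strict Implicit. Unset Printing Implicit Defensive.
Import Order.TTheory GRing.Theory Num.Theory.
Local Open Scope ring_scope.

(* Variables x_1..x_n are 'X_0 .. 'X_(n-1) (0-based indices 'I_n).
   A differential form in R[x]⊗∧R^n is represented by its coefficient
   function on the standard basis: w J is the coefficient of
   dx_{i_1}∧...∧dx_{i_k} where J = {i_1 < ... < i_k}. *)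
Definition form (R : nzRingType) (n : nat) := {set 'I_n} -> {mpoly R[n]}.

Definition pderivn (R : nzRingType) (n : nat) (l : 'I_n) (j : nat)
  (p : {mpoly R[n]}) : {mpoly R[n]} := iter j (mderiv l) p.

(* d_j (h dx_I) = sum_l (∂_l^j h) dx_l ∧ dx_I ; on the basis,
   dx_l ∧ dx_I = 0 if l ∈ I, and = (-1)^{#{i∈I | i<l}} dx_{I ∪ {l}} otherwise. *)
Definition dj (R : nzRingType) (n : nat) (j : nat) (w : form R n) : form R n :=
  fun J => \sum_(l in J)
     (-1) ^+ #|[set i in J | (i < l)%N]| *: pderivn l j (w (J :\ l)).

Definition Vdm (R : nzRingType) (n : nat) : {mpoly R[n]} :=
  \prod_(i < n) \prod_(j < n | (i < j)%N) ('X_i - 'X_j).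

Definition Vdm_form (R : nzRingType) (n : nat) : form R n :=
  fun J => if J == set0 then @Vdm R n else 0.

Definition omega (R : nzRingType) (n : nat) (m : seq nat) : form R n :=
  foldr (fun j w => dj j w) (@Vdm_form R n) m.

(* h^{m}_{n-k+1,...,n} : coefficient of dx_{n-k+1}∧...∧dx_n
   (0-based: indices n-k, ..., n-1) *)
Definition h_last (R : nzRingType) (n k : nat) (m : seq nat) : {mpoly R[n]} :=
  @omega R n m [set i : 'I_n | (n - k <= i)%N].

Definition compl_js (n : nat) (m : seq nat) : seq nat :=
  [seq j <- iota 1 n | j \notin [seq (n - mi)%N | mi <- m]].

(* C(m_1,...,m_k) = (n - j_1, ..., n - j_{n-k-1}) : drop the last j. *)
Definition Cop (n : nat) (m : seq nat) : seq nat :=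
  [seq (n - j)%N | j <- take (size (compl_js n m)).-1 (compl_js n m)].

Definition Cmono (n : nat) (m : seq nat) : 'X_{1..n} :=
  [multinom nth 0%N (Cop n m) i | i < n].

Definition admissible (n k : nat) (m : seq nat) : bool :=
  [&& size m == k, sorted gtn m & all (fun x => (1 <= x <= n - 1)%N) m].

From Pilot Require Import Defs.
From HB Require Import structures.
From mathcomp Require Import all_boot all_order all_algebra all_fingroup.
From mathcomp Require Import mpoly.
From mathcomp Require Import ring zify.
Set Implicit Arguments. Unset Strict Implicit. Unset Printing Implicit Defensive.
Import Order.TTheory GRing.Theory Num.Theory.
Local Open Scope ring_scope.

(* Since Delta is alternating, its coefficient at x^E is +-1 when the exponents
   E are a permutation of 0, ..., n-1 and 0 otherwise.  At a monomial x^M free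
   of the variables of J, each term of the coefficient of dx_J in
   d_{a_1} ... d_{a_k} Delta chooses the variable of J that receives the
   exponent a_1; moving it to the front costs exactly the wedge sign, so all
   these terms agree and, inductively, the coefficient is
   k! a_1! ... a_k! times the coefficient of Delta at M with a_1, ..., a_k put
   on J in increasing order.  For J the last k variables and x^M the monomial
   of C(m), that exponent vector is (C(m), 0, r), a permutation of
   0, ..., n-1 exactly when r = m, because C(m), {0} and m partition
   {0, ..., n-1}. *)

Section Multinomials.
Variable n : nat.

Definition mnm_of_seq (s : seq nat) : 'X_{1..n} := [multinom nth 0%N s i | i < n].

Fixpoint mnm_assign (ls : seq 'I_n) (vs : seq nat) : 'X_{1..n} :=
  match ls, vs with
  | l :: ls', v :: vs' => (U_(l) *+ v + mnm_assign ls' vs')%MM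
  | _, _ => 0%MM
  end.

Lemma mnm_assignE ls vs i : uniq ls ->
  mnm_assign ls vs i = if i \in ls then nth 0%N vs (index i ls) else 0%N.
Proof.
elim: ls vs => [|l ls IH] [|v vs] /=; rewrite ?mnm0E ?nth_nil ?if_same //.
case/andP => nl U; rewrite mnmDE mulmnE mnm1E IH // in_cons.
case: (eqVneq l i) => [<-|ne] /=; first by rewrite (negbTE nl) mul1n addn0.
by rewrite mul0n.
Qed.

Definition mnm_tperm (x y : 'I_n) (E : 'X_{1..n}) : 'X_{1..n} :=
  [multinom E (tperm x y i) | i < n].

Lemma mnm_tperm_add2 (N : 'X_{1..n}) x y a b : N x = N y ->
  mnm_tperm x y (N + U_(x) *+ a + U_(y) *+ b)%MM = (N + U_(x) *+ b + U_(y) *+ a)%MM.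
Proof.
move=> Nxy; apply/mnmP => i; rewrite mnmE !mnmDE !mulmnE !mnm1E.
have [<-|nxy] := eqVneq x y; first by rewrite tperm1 perm1 -!addnA [(_ * b + _)%N]addnC.
have nyx : y != x by rewrite eq_sym.
case: tpermP => [->|->|/eqP xi /eqP yi]; last by rewrite !(eq_sym _ i) (negbTE xi) (negbTE yi).
- by rewrite Nxy !eqxx (negbTE nxy) (negbTE nyx) /=; lia.
- by rewrite -Nxy !eqxx (negbTE nxy) (negbTE nyx) /=; lia.
Qed.

Lemma mnm_tpermK x y : involutive (mnm_tperm x y).
Proof. by move=> E; apply/mnmP => i; rewrite !mnmE tpermK. Qed.

(* The exponent vector of the term of [s] in the Leibniz expansion of the
   Vandermonde determinant. *)
Definition perm_mnm (s : 'S_n) : 'X_{1..n} := [multinom ((s^-1)%g i : nat) | i < n].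

Lemma perm_mnm_mulT (s : 'S_n) x y : perm_mnm (s * tperm x y)%g = mnm_tperm x y (perm_mnm s).
Proof. by apply/mnmP => i; rewrite !mnmE invMg permM tpermV. Qed.

Lemma perm_mnm_inj : injective perm_mnm.
Proof.
move=> s t /mnmP st; apply: invg_inj; apply/permP => i.
by apply: val_inj; have := st i; rewrite !mnmE.
Qed.

Lemma perm_mnmP s : size s = n ->
  reflect (exists σ, perm_mnm σ = mnm_of_seq s) (perm_eq s (iota 0 n)).
Proof.
move=> sz; apply: (iffP idP) => [ps | [σ eσ]].
  have us : uniq s by rewrite (perm_uniq ps) iota_uniq.
  have lt_s (i : 'I_n) : (nth 0%N s i < n)%N.
    by have := mem_nth 0%N (_ : (i < size s)%N); rewrite (perm_mem ps) mem_iota sz; apply.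
  have f_inj : injective (fun i : 'I_n => Ordinal (lt_s i)).
    by move=> i j /(congr1 val) /= /eqP; rewrite nth_uniq ?sz // => /eqP /val_inj.
  exists (perm f_inj)^-1%g; apply/mnmP => i.
  by rewrite !mnmE invgK permE.
have sub : {subset iota 0 n <= s}.
  move=> x; rewrite mem_iota add0n => /= ltxn.
  have /mnmP/(_ (σ (Ordinal ltxn))) := eσ; rewrite !mnmE permK /= => ->.
  by rewrite mem_nth ?sz.
have sz_le : (size s <= size (iota 0 n))%N by rewrite sz size_iota.
have [_ eq_s] := uniq_min_size (iota_uniq 0 n) sub sz_le.
apply: uniq_perm (leq_size_uniq (iota_uniq 0 n) sub sz_le) (iota_uniq 0 n) _.
by move=> x; rewrite eq_s.
Qed.

End Multinomials.

Section Vandermonde.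
Variables (R : comNzRingType) (n : nat).
Local Notation P := {mpoly R[n]}.

Lemma mcoeff_sign (b : nat) (p : P) E : ((-1) ^+ b * p)@_E = (-1) ^+ b * p@_E.
Proof. by rewrite -(rmorph_sign (@mpolyC n R)) mcoeffCM. Qed.

Definition alternating (p : P) :=
  forall E x y, x != y -> p@_(mnm_tperm x y E) = - p@_E.

Definition Vdm_sign : nat := \sum_(i < n) #|[pred j : 'I_n | (i < j)%N]|.

Lemma Vdm_det : Vdm R n = (-1) ^+ Vdm_sign * \det (Vandermonde n (\row_j ('X_j : P))).
Proof.
rewrite det_Vandermonde /Vdm /Vdm_sign.
rewrite (big_morph (fun k => (-1) ^+ k : P) (fun a b => exprD _ a b) (expr0 _)) //.
rewrite -big_split /=; apply: eq_bigr => i _.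
rewrite -(prodrN [pred j : 'I_n | (i < j)%N]); apply: eq_bigr => j _.
by rewrite !mxE opprB.
Qed.

Lemma mcoeff_Vdm E :
  (Vdm R n)@_E = (-1) ^+ Vdm_sign * \sum_(s : 'S_n) (-1) ^+ s * (perm_mnm s == E)%:R.
Proof.
rewrite Vdm_det mcoeff_sign /determinant raddf_sum; congr (_ * _).
apply: eq_bigr => s _; rewrite [LHS]/= mcoeff_sign -mcoeffX; congr (_ * mcoeff _ _).
by rewrite (mpolyXE R s (perm_mnm s)); apply: eq_bigr => i _; rewrite !mxE mnmE permK.
Qed.

Lemma Vdm_alternating : alternating (Vdm R n).
Proof.
move=> E x y xy; rewrite !mcoeff_Vdm (reindex_inj (mulIg (tperm x y))) /= -mulrN -sumrN.
congr (_ * _); apply: eq_bigr => s _.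
rewrite odd_permM odd_tperm xy signr_addb perm_mnm_mulT.
by rewrite (inj_eq (can_inj (mnm_tpermK x y))) expr1 mulrN1 mulNr.
Qed.

Lemma mcoeff_Vdm_perm s : (Vdm R n)@_(perm_mnm s) = (-1) ^+ (Vdm_sign + s).
Proof.
rewrite mcoeff_Vdm (bigD1 s) //= eqxx mulr1 big1 ?addr0 ?exprD // => t nts.
by rewrite (inj_eq (@perm_mnm_inj n)) (negbTE nts) mulr0.
Qed.

Lemma mcoeff_Vdm_eq0 E : (forall s, perm_mnm s != E) -> (Vdm R n)@_E = 0.
Proof. by move=> nE; rewrite mcoeff_Vdm big1 ?mulr0 // => s _; rewrite (negbTE (nE s)) mulr0. Qed.

Lemma mcoeff_Vdm_seq s : perm_eq s (iota 0 n) ->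
  exists b : bool, (Vdm R n)@_(mnm_of_seq n s) = (-1) ^+ b.
Proof.
move=> ps; have /perm_mnmP[|σ <-] := ps; first by rewrite (perm_size ps) size_iota.
by exists (odd (Vdm_sign + σ)); rewrite mcoeff_Vdm_perm signr_odd.
Qed.

Lemma mcoeff_Vdm_seq_eq0 s : size s = n -> ~~ perm_eq s (iota 0 n) ->
  (Vdm R n)@_(mnm_of_seq n s) = 0.
Proof.
move=> sz nps; apply: mcoeff_Vdm_eq0 => σ; apply/eqP => eσ.
by move: nps; rewrite (introT (perm_mnmP sz)) //; exists σ.
Qed.

End Vandermonde.

Lemma count_lt_index d (T : porderType d) (s : seq T) x :
  sorted <%O s -> x \in s -> count (fun y => y < x)%O s = index x s.
Proof.
elim: s => [//|y s IH] /= s_sorted; rewrite in_cons => /predU1P[->|xs].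
  rewrite eqxx ltxx add0n; apply/eqP; rewrite -leqn0 leqNgt -has_count.
  by apply/hasPn => z zs /=; rewrite lt_gtF // (allP (order_path_min lt_trans s_sorted)).
have yx : (y < x)%O := allP (order_path_min lt_trans s_sorted) x xs.
by rewrite yx (lt_eqF yx) IH // (path_sorted s_sorted).
Qed.

Section IteratedDifferentials.
Variables (R : comNzRingType) (n : nat).
Local Notation P := {mpoly R[n]}.

Definition form0 (p : P) : Defs.form R n := fun J => if J == set0 then p else 0.

Definition djs (ms : seq nat) (w : Defs.form R n) : Defs.form R n := foldr (fun j w => dj j w) w ms.

Lemma card_lt_index (ls : seq 'I_n) l : sorted <%O ls -> l \in ls ->
  #|[set i in [set x in ls] | (i < l)%N]| = index l ls.
Proof.
move=> ls_sorted l_in; have ls_uniq := sorted_uniq lt_trans ltxx ls_sorted.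
have -> : [set i in [set x in ls] | (i < l)%N] = [set x in [seq i <- ls | (i < l)%O]].
  by apply/setP => i; rewrite !inE mem_filter andbC.
by rewrite cardsE (card_uniqP _) ?filter_uniq // size_filter count_lt_index.
Qed.

Lemma mcoeff_pderivn (l : 'I_n) (a : nat) (q : P) (M : 'X_{1..n}) : M l = 0%N ->
  (pderivn l a q)@_M = a`!%:R * q@_(M + U_(l) *+ a).
Proof.
elim: a q => [|a IH] q Ml; first by rewrite mulm0n addm0 mul1r.
rewrite /pderivn iterSr -/(pderivn l a (mderiv l q)) IH // mcoeff_mderiv.
rewrite mnmDE mulmnE mnm1E eqxx Ml mul1n add0n mulrnAr -mulrnAl -mulrnA mulnC -factS.
by rewrite mulmS [(U_(l) + _)%MM]addmC addmA.
Qed.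

Section Alternating.
Variable p : P.
Hypothesis p_alt : alternating p.

Lemma mcoeff_assign_rotate (ls : seq 'I_n) (vs : seq nat) (M : 'X_{1..n}) l :
  uniq ls -> l \in ls -> size vs = size ls -> {in ls, forall x, M x = 0%N} ->
  p@_(M + mnm_assign (l :: rem l ls) vs) = (-1) ^+ index l ls * p@_(M + mnm_assign ls vs).
Proof.
elim: ls vs M => [//|y t IH] vs M /= /andP[yt t_uniq] l_in sz M0.
have [<-|nyl] := eqVneq y l; first by rewrite expr0 mul1r.
have lt : l \in t by move: l_in; rewrite in_cons eq_sym (negbTE nyl).
case: vs sz => [|a [|b vs]] //= sz; first by case: t lt sz {IH yt t_uniq l_in M0}.
set N := (M + mnm_assign (rem l t) vs)%MM.
have N_ly : N l = N y.
  rewrite !mnmDE !mnm_assignE ?rem_uniq // (mem_rem_uniqF _ t_uniq).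
  by rewrite (negbTE (contra (@mem_rem _ _ _ _) yt)) !M0 ?inE ?eqxx ?lt ?orbT.
rewrite exprS mulN1r mulNr [(M + (U_(y) *+ a + _))%MM]addmA.
rewrite -(IH (b :: vs) (M + U_(y) *+ a)%MM) //; first last.
- move=> x xt; rewrite mnmDE mulmnE mnm1E M0 ?inE ?xt ?orbT //.
  by case: eqVneq xt yt => // -> ->.
- by case: sz.
have -> : (M + (U_(l) *+ a + (U_(y) *+ b + mnm_assign (rem l t) vs)))%MM
        = (N + U_(l) *+ a + U_(y) *+ b)%MM by apply/mnmP => i; rewrite !mnmDE; lia.
have -> : (M + U_(y) *+ a + (U_(l) *+ b + mnm_assign (rem l t) vs))%MM
        = (N + U_(l) *+ b + U_(y) *+ a)%MM by apply/mnmP => i; rewrite !mnmDE; lia.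
by rewrite -(mnm_tperm_add2 a b N_ly) p_alt ?opprK // eq_sym.
Qed.

Lemma mcoeff_djs (ms : seq nat) (ls : seq 'I_n) (M : 'X_{1..n}) :
  sorted <%O ls -> size ls = size ms -> {in ls, forall x, M x = 0%N} ->
  (djs ms (form0 p) [set x in ls])@_M
    = ((size ms)`! * \prod_(a <- ms) a`!)%:R * p@_(M + mnm_assign ls ms).
Proof.
elim: ms ls M => [|a ms IH] ls M ls_sorted sz M0.
  by case: ls sz {ls_sorted M0} => // _; rewrite big_nil mul1r addm0 /= /form0 set_nil eqxx.
have ls_uniq := sorted_uniq lt_trans ltxx ls_sorted; rewrite /=.
set C := ((a`! * ((size ms)`! * \prod_(b <- ms) b`!))%:R * p@_(M + mnm_assign ls (a :: ms))).
(* The wedge sign of dx_l against dx_(J :\ l) is cancelled by the sign of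
   moving the exponent of l to the front, so all terms of d_a agree. *)
have term l : l \in [set x in ls] ->
    ((-1) ^+ #|[set i in [set x in ls] | (i < l)%N]|
       *: pderivn l a (djs ms (form0 p) ([set x in ls] :\ l)))@_M = C.
  rewrite inE => l_in; have rem_sorted : sorted <%O (rem l ls).
    by rewrite rem_filter //; apply: sorted_filter ls_sorted; apply: lt_trans.
  have -> : [set x in ls] :\ l = [set x in rem l ls].
    by apply/setP => x; rewrite !inE (mem_rem_uniq l ls_uniq) inE.
  rewrite mcoeffZ mcoeff_pderivn ?M0 // IH ?size_rem ?sz //; last first.
    move=> x; rewrite (mem_rem_uniq l ls_uniq) inE => /andP[xl x_in].
    by rewrite mnmDE mulmnE mnm1E eq_sym (negbTE xl) M0.
  rewrite -addmA -[(U_(l) *+ a + _)%MM]/(mnm_assign (l :: rem l ls) (a :: ms)).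
  rewrite mcoeff_assign_rotate ?card_lt_index ?sz //= /C.
  by rewrite mulrCA (mulrCA ((-1) ^+ _)) signrMK !natrM !mulrA.
rewrite /dj raddf_sum (eq_bigr _ term) sumr_const cardsE (card_uniqP ls_uniq) sz /C.
by rewrite -mulrnAl -mulr_natr -natrM big_cons factS; congr (_%:R * _) => /=; ring.
Qed.

End Alternating.
End IteratedDifferentials.

Lemma sorted_gtn_uniq (s : seq nat) : sorted gtn s -> uniq s.
Proof. exact: (@sorted_uniq _ gtn (rev_trans ltn_trans) ltnn). Qed.

Lemma gtn_sorted_eq (s t : seq nat) : sorted gtn s -> sorted gtn t -> s =i t -> s = t.
Proof. exact: (@irr_sorted_eq _ gtn (rev_trans ltn_trans) ltnn). Qed.

Section ComplementSequence.
Variable n : nat.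
Hypothesis n_gt0 : (0 < n)%N.

Lemma Cop_split c : 0%N \notin c ->
  Cop n c = [seq n - j | j <- [seq j <- iota 1 n.-1 | j \notin [seq n - x | x <- c]]]%N.
Proof.
move=> c0; rewrite /Cop /compl_js.
have -> : iota 1 n = iota 1 n.-1 ++ [:: n].
  by rewrite -[n in iota _ n](prednK n_gt0) -[n.-1.+1]addn1 iotaD add1n prednK.
rewrite filter_cat /=.
have -> : (n \notin [seq (n - x)%N | x <- c]) = true.
  by apply/mapP => -[x xc nx]; move: c0; rewrite (_ : 0%N = x) ?xc //; lia.
by rewrite size_cat addn1 take_size_cat.
Qed.

Lemma mem_Cop c x : 0%N \notin c -> (x \in Cop n c) = (0 < x < n)%N && (x \notin c).
Proof.
move=> c0; rewrite Cop_split //; apply/mapP/andP => [[j] | [x_range xc]].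
  rewrite mem_filter mem_iota => /andP[jc j_range] ->; split; first lia.
  by apply: contra jc => xc; apply/mapP; exists (n - j)%N => //; lia.
exists (n - x)%N; last lia.
rewrite mem_filter mem_iota; apply/andP; split; last lia.
by apply: contra xc => /mapP[y yc nxy]; rewrite (_ : x = y) //; lia.
Qed.

Lemma sorted_Cop c : 0%N \notin c -> sorted gtn (Cop n c).
Proof.
move=> c0; rewrite Cop_split //.
apply: (homo_sorted_in (P := [pred j | (j < n)%N]) (e := ltn)).
- by move=> a b; rewrite !inE /gtn /=; lia.
- by apply/allP => j; rewrite mem_filter mem_iota inE; lia.
- by apply: sorted_filter; [exact: ltn_trans | exact: iota_ltn_sorted].
Qed.

Variable c : seq nat.
Hypotheses (c_sorted : sorted gtn c) (c_range : {in c, forall x, 0 < x < n}%N).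

Let c0 : 0%N \notin c. Proof. by apply/negP => /c_range. Qed.

Lemma CopK : Cop n (Cop n c) = c.
Proof.
have Cc0 : 0%N \notin Cop n c by rewrite mem_Cop // ltnn.
apply: gtn_sorted_eq (sorted_Cop Cc0) c_sorted _ => x.
rewrite !mem_Cop //; have [xc|_] := boolP (x \in c); first by rewrite c_range.
by rewrite andbT andbN.
Qed.

Lemma perm_Cop_cat : perm_eq (Cop n c ++ 0%N :: c) (iota 0 n).
Proof.
apply: uniq_perm (iota_uniq 0 n) _ => [|x].
  rewrite cat_uniq /= c0 (sorted_gtn_uniq c_sorted) (sorted_gtn_uniq (sorted_Cop c0)).
  rewrite mem_Cop // ltnn andbT /= andbT; apply/hasPn => x xc.
  by rewrite mem_Cop // xc andbF.
rewrite mem_cat mem_Cop // in_cons mem_iota add0n /=.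
have [xc|_] := boolP (x \in c); first by rewrite !orbT; case/andP: (c_range xc).
by rewrite andbT orbF; case: x => [|x] //=; rewrite orbF.
Qed.

Lemma size_Cop : size (Cop n c) = (n - (size c).+1)%N.
Proof. by have := perm_size perm_Cop_cat; rewrite size_cat /= size_iota; lia. Qed.

End ComplementSequence.

Lemma admissible_range n k m : admissible n k m -> {in m, forall x, 0 < x < n}%N.
Proof. by case/and3P => _ _ /allP m_range x /m_range; lia. Qed.

Section LastOrdinals.
Variables n k : nat.
Hypothesis k_le_n : (k <= n)%N.

Definition last_ords : seq 'I_n := [seq i : 'I_n <- enum 'I_n | (n - k <= i)%N].

Lemma val_last_ords : map val last_ords = iota (n - k) k.
Proof.
have -> : map val last_ords = [seq x <- iota 0 n | (n - k <= x)%N].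
  by rewrite -val_enum_ord filter_map.
apply: (irr_sorted_eq ltn_trans ltnn).
- by apply: sorted_filter; [exact: ltn_trans | exact: iota_ltn_sorted].
- exact: iota_ltn_sorted.
- by move=> x; rewrite mem_filter !mem_iota add0n subnK // leq0n /=.
Qed.

Lemma sorted_last_ords : sorted <%O last_ords.
Proof. by have := iota_ltn_sorted (n - k) k; rewrite -val_last_ords sorted_map. Qed.

Lemma size_last_ords : size last_ords = k.
Proof. by rewrite -(size_map val) val_last_ords size_iota. Qed.

Lemma mem_last_ords (i : 'I_n) : (i \in last_ords) = (n - k <= i)%N.
Proof. by rewrite mem_filter mem_enum andbT. Qed.

Lemma index_last_ords (i : 'I_n) : i \in last_ords -> index i last_ords = (i - (n - k))%N.
Proof.
move=> i_in; rewrite -(index_map val_inj) val_last_ords /=.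
have i_iota : (i : nat) \in iota (n - k) k by rewrite -val_last_ords map_f.
have := nth_index 0%N i_iota; rewrite nth_iota; first lia.
by rewrite -[k in (_ < k)%N](size_iota (n - k) k) index_mem.
Qed.

Lemma mnm_of_seq_cat_assign c r : (k < n)%N -> size c = (n - k.+1)%N -> size r = k ->
  (mnm_of_seq n c + mnm_assign last_ords r)%MM = mnm_of_seq n (c ++ 0%N :: r).
Proof.
move=> k_lt_n szc szr; apply/mnmP => i.
rewrite mnmDE !mnmE mnm_assignE ?(sorted_uniq lt_trans ltxx sorted_last_ords) //.
rewrite mem_last_ords nth_cat szc; case: (ltnP i (n - k.+1)) => [i_lt|i_ge].
  by rewrite ifF ?addn0 //; apply/negbTE; rewrite -ltnNge; lia.
rewrite nth_default ?szc // add0n.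
have [i_eq|i_ne] := eqVneq (i : nat) (n - k.+1)%N.
  by rewrite ifF i_eq ?subnn //; apply/negbTE; rewrite -ltnNge; lia.
rewrite ifT ?index_last_ords ?mem_last_ords; try lia.
by rewrite (_ : i - (n - k.+1) = (i - (n - k)).+1)%N //; lia.
Qed.

End LastOrdinals.

Lemma mcoeff_h_last (R : comNzRingType) n k c r :
  (k < n)%N -> size c = (n - k.+1)%N -> size r = k ->
  (h_last R n k r)@_(mnm_of_seq n c)
    = ((k`! * \prod_(a <- r) a`!)%N)%:R * (Vdm R n)@_(mnm_of_seq n (c ++ 0%N :: r)).
Proof.
move=> k_lt_n szc szr; have k_le_n := ltnW k_lt_n; rewrite /h_last.
have -> : [set i : 'I_n | n - k <= i]%N = [set x in last_ords n k].
  by apply/setP => i; rewrite !inE mem_last_ords.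
rewrite -(mnm_of_seq_cat_assign k_le_n) // -[in k`!]szr.
apply: (mcoeff_djs (@Vdm_alternating R n)).
- exact: sorted_last_ords.
- by rewrite size_last_ords.
- by move=> i; rewrite mem_last_ords // mnmE => i_ge; rewrite nth_default // szc; lia.
Qed.

Theorem lemma11 (R : realFieldType) (n k : nat) (m : seq nat) :
  (2 <= n)%N -> (1 <= k <= n - 1)%N -> admissible n k m ->
  [/\ Cop n (Cop n m) = m,
      (exists s : bool,
         (h_last R n k m)@_(Cmono n m)
           = (-1) ^+ s * ((k`! * \prod_(mi <- m) mi`!)%N)%:R)
    & forall r : seq nat, admissible n k r ->
        (h_last R n k r)@_(Cmono n m) != 0 -> r = m].
Proof.
move=> n_ge2 k_range adm; have n_gt0 : (0 < n)%N by lia.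
have k_lt_n : (k < n)%N by lia.
have [/eqP m_size m_sorted _] := and3P adm; have m_range := admissible_range adm.
have C_size : size (Cop n m) = (n - k.+1)%N by rewrite size_Cop // m_size.
have C_perm := perm_Cop_cat n_gt0 m_sorted m_range.
split; first exact: CopK.
  have [b Vdm_b] := mcoeff_Vdm_seq R C_perm.
  by exists b; rewrite mcoeff_h_last // Vdm_b mulrC.
move=> r adr; have [/eqP r_size r_sorted _] := and3P adr.
rewrite mcoeff_h_last //; apply: contraNeq => r_ne_m.
rewrite mcoeff_Vdm_seq_eq0 ?mulr0 //; first by rewrite size_cat /= r_size; lia.
apply: contra r_ne_m => Cr_perm; apply/eqP/gtn_sorted_eq => //.
apply: perm_mem; rewrite -(perm_cons 0%N) -(perm_cat2l (Cop n m)).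
by rewrite (perm_trans Cr_perm) // perm_sym.
Qed.
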